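(* Let $\omega$ be a valid weight, let $a\in\mathbb{C}\setminus\{0\}$, and for $b\in\mathbb{C}$ let $V_b=M_{b-z}^*M_{b-z}$ act on $H^2_\omega$. Then for each $\theta\in\mathbb{R}$, $V_a$ is unitarily equivalent to $V_{ae^{i\theta}}$. In particular, $\sigma(V_a)=\sigma(V_{ae^{i\theta}})$ and $\sigma_{\mathrm p}(V_a)=\sigma_{\mathrm p}(V_{ae^{i\theta}})$ for all $\theta\in\mathbb{R}$.
   Context: A weight $\omega=\{\omega_n\}_{n\ge0}$ is called valid if it is a monotonic sequence of positive numbers with $\omega_0=1$, $\lim_{n\to\infty}\omega_{n+1}/\omega_n=1$ and $\sum_{n=0}^\infty(1-\omega_{n+1}/\omega_n)^2<\infty$. The weighted Hardy space $H^2_\omega$ is the Hilbert space of holomorphic functions $f(z)=\sum_{n\ge0}a_nz^n$ on the unit disc with $\|f\|_\omega^2=\sum_{n\ge0}|a_n|^2\omega_n<\infty$. $M_\varphi$ denotes multiplication by the polynomial $\varphi$ on $H^2_\omega$ and $M_\varphi^*$ its adjoint. $\sigma$ and $\sigma_{\mathrm p}$ denote the spectrum and point spectrum. *)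

From Stdlib Require Import Reals Lra ClassicalEpsilon.
From Coquelicot Require Import Coquelicot.
Open Scope R_scope.

Definition valid_weight (w : nat -> R) : Prop :=
  (forall n, 0 < w n) /\ w 0%nat = 1 /\
  ((forall n, w n <= w (S n)) \/ (forall n, w (S n) <= w n)) /\
  is_lim_seq (fun n => w (S n) / w n) 1 /\
  ex_series (fun n => (1 - w (S n) / w n) ^ 2).

(* Elements of H^2_omega are identified with their Taylor coefficient
   sequences f(z) = sum_n a n z^n. *)
Definition in_H2 (w : nat -> R) (a : nat -> C) : Prop :=
  ex_series (fun n => (Cmod (a n)) ^ 2 * w n).

Definition ip (w : nat -> R) (f g : nat -> C) : C :=
  (Series (fun n => Re (Cmult (f n) (Cconj (g n))) * w n),
   Series (fun n => Im (Cmult (f n) (Cconj (g n))) * w n)).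

Definition Mbz (b : C) (f : nat -> C) : nat -> C :=
  fun n => Cminus (Cmult b (f n)) (match n with O => RtoC 0 | S m => f m end).

(* Hilbert-space adjoint of T on H^2_omega: (adjoint w T) g is the unique
   h in H^2_omega with <T f, g> = <f, h> for all f in H^2_omega
   (chosen by epsilon; default 0 if no such h exists). *)
Definition adjoint (w : nat -> R) (T : (nat -> C) -> (nat -> C))
  (g : nat -> C) : nat -> C :=
  epsilon (inhabits (fun _ => RtoC 0))
    (fun h => in_H2 w h /\ forall f, in_H2 w f -> ip w (T f) g = ip w f h).

Definition Vop (w : nat -> R) (b : C) (f : nat -> C) : nat -> C :=
  adjoint w (Mbz b) (Mbz b f).

Definition unitary (w : nat -> R) (U : (nat -> C) -> (nat -> C)) : Prop :=
  (forall f, in_H2 w f -> in_H2 w (U f)) /\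
  (forall f g (c : C), in_H2 w f -> in_H2 w g ->
     U (fun n => Cplus (Cmult c (f n)) (g n)) =
     (fun n => Cplus (Cmult c (U f n)) (U g n))) /\
  (forall f g, in_H2 w f -> in_H2 w g -> ip w (U f) (U g) = ip w f g) /\
  (forall g, in_H2 w g -> exists f, in_H2 w f /\ U f = g).

Definition unitarily_equivalent (w : nat -> R)
  (A B : (nat -> C) -> (nat -> C)) : Prop :=
  exists U, unitary w U /\ forall f, in_H2 w f -> U (A f) = B (U f).

(* Spectrum of an operator T on H^2_omega: lambda such that T - lambda I
   is not a bijection of H^2_omega onto itself (by the open mapping theorem
   this is the usual spectrum for bounded T). *)
Definition spectrum (w : nat -> R) (T : (nat -> C) -> (nat -> C)) (l : C) : Prop :=
  ~ (forall g, in_H2 w g ->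
       exists! f, in_H2 w f /\ (fun n => Cminus (T f n) (Cmult l (f n))) = g).

Definition point_spectrum (w : nat -> R) (T : (nat -> C) -> (nat -> C)) (l : C) : Prop :=
  exists f, in_H2 w f /\ f <> (fun _ => RtoC 0) /\
            T f = (fun n => Cmult l (f n)).

Definition cexpi (t : R) : C := (cos t, sin t).

From Stdlib Require Import Reals Lra FunctionalExtensionality ClassicalEpsilon.
From Coquelicot Require Import Coquelicot.
Open Scope R_scope.

(* Rotating the variable, f(z) |-> f(e^{-i theta} z), multiplies the n-th Taylor
   coefficient by e^{-i n theta}, so it is a unitary of H^2_omega.  It conjugates
   M_{a-z} into e^{-i theta} M_{a e^{i theta} - z}, hence V_a into V_{a e^{i theta}},
   and unitarily equivalent operators have the same spectrum and point spectrum.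
   Since the adjoint in V_b is only specified implicitly, it is computed:
   M_{b-z}^* g = conj(b) g - S^* g with (S^* g)_n = g_{n+1} omega_{n+1} / omega_n,
   which is bounded because omega_{n+1} / omega_n converges. *)

Lemma valid_weight_pos (w : nat -> R) : valid_weight w -> forall n, 0 < w n.
Proof. now intros [Hpos _]. Qed.

Lemma valid_weight_ratio_bounded (w : nat -> R) :
  valid_weight w -> exists K, forall n, w (S n) <= K * w n.
Proof.
  intros [Hpos [_ [_ [Hlim _]]]].
  destruct (filterlim_bounded (fun n => w (S n) / w n) (ex_intro _ 1 Hlim)) as [K HK].
  exists K; intro n.
  specialize (Hpos n); specialize (HK n).
  apply Rle_trans with (w (S n) / w n * w n).
  - right; field; lra.
  - apply Rmult_le_compat_r; [lra|].
    apply Rle_trans with (2 := HK), Rle_abs.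
Qed.

Lemma Cmod_add_sqr_le (x y : C) : Cmod (x + y) ^ 2 <= 2 * Cmod x ^ 2 + 2 * Cmod y ^ 2.
Proof.
  pose proof (Cmod_triangle x y). pose proof (Cmod_ge_0 x). pose proof (Cmod_ge_0 y).
  pose proof (Cmod_ge_0 (x + y)).
  apply Rle_trans with ((Cmod x + Cmod y) ^ 2).
  - apply pow_incr; lra.
  - pose proof (pow2_ge_0 (Cmod x - Cmod y)); lra.
Qed.

Lemma Im_le_Cmod (c : C) : Rabs (Im c) <= Cmod c.
Proof.
  rewrite <- (Rabs_pos_eq (Cmod c)) by apply Cmod_ge_0.
  apply triangle_rectangle_le with (Re c).
  rewrite !Rsqr_pow2, Cmod2_alt; lra.
Qed.

Lemma Re_mul_conj (c : C) : Re (c * Cconj c) = Cmod c ^ 2.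
Proof. rewrite Cmod2_alt; destruct c; simpl; ring. Qed.

Lemma Cconj_RtoC (r : R) : Cconj (RtoC r) = RtoC r.
Proof. apply injective_projections; simpl; ring. Qed.

Lemma Re_sub (x y : C) : Re (x - y)%C = Re x - Re y.
Proof. destruct x, y; simpl; ring. Qed.

Lemma Im_sub (x y : C) : Im (x - y)%C = Im x - Im y.
Proof. destruct x, y; simpl; ring. Qed.

Lemma Re_mul_RtoC (x : C) (r : R) : Re (x * RtoC r)%C = Re x * r.
Proof. destruct x; simpl; ring. Qed.

Lemma Im_mul_RtoC (x : C) (r : R) : Im (x * RtoC r)%C = Im x * r.
Proof. destruct x; simpl; ring. Qed.

Lemma Series_nonneg (a : nat -> R) : (forall n, 0 <= a n) -> ex_series a -> 0 <= Series a.
Proof.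
  intros Ha Hex; rewrite <- (Rmult_0_l (Series a)), <- Series_scal_l.
  apply Series_le; [intro n; specialize (Ha n); lra | exact Hex].
Qed.

Lemma Series_nonneg_eq0 (a : nat -> R) :
  (forall n, 0 <= a n) -> ex_series a -> Series a = 0 -> forall n, a n = 0.
Proof.
  intros Ha Hex H0 n; revert a Ha Hex H0.
  induction n as [|n IH]; intros a Ha Hex H0.
  all: assert (Hex' : ex_series (fun k => a (S k))) by now apply (ex_series_incr_1 a).
  all: assert (Htail := Series_nonneg _ (fun k => Ha (S k)) Hex').
  all: rewrite Series_incr_1 in H0 by exact Hex; pose proof (Ha 0%nat).
  - lra.
  - apply (IH (fun k => a (S k))); [intro; apply Ha | exact Hex' | lra].
Qed.

Definition shift (f : nat -> C) (n : nat) : C :=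
  match n with O => 0%C | S m => f m end.

Lemma Mbz_eq (b : C) (f : nat -> C) : Mbz b f = fun n => (b * f n - shift f n)%C.
Proof. apply functional_extensionality; now intros []. Qed.

Section H2.

Variable w : nat -> R.
Hypothesis w_pos : forall n, 0 < w n.

Lemma in_H2_scal (c : C) (f : nat -> C) : in_H2 w f -> in_H2 w (fun n => c * f n)%C.
Proof.
  intro Hf; unfold in_H2 in *.
  apply ex_series_ext with (fun n => Cmod (f n) ^ 2 * w n * Cmod c ^ 2).
  - intro n; cbn -[Cmod pow]; rewrite Cmod_mult; ring.
  - now apply ex_series_scal_r.
Qed.

Lemma in_H2_add (f g : nat -> C) : in_H2 w f -> in_H2 w g -> in_H2 w (fun n => f n + g n)%C.
Proof.
  intros Hf Hg; unfold in_H2 in *.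
  apply (ex_series_le (V := R_CompleteNormedModule) _
    (fun n => (Cmod (f n) ^ 2 * w n + Cmod (g n) ^ 2 * w n) * 2)).
  - intro n; specialize (w_pos n).
    rewrite Rabs_pos_eq by (apply Rmult_le_pos; [apply pow2_ge_0 | lra]).
    pose proof (Cmod_add_sqr_le (f n) (g n)); nra.
  - apply ex_series_scal_r; now apply (ex_series_plus (V := R_NormedModule)).
Qed.

Lemma in_H2_sub (f g : nat -> C) : in_H2 w f -> in_H2 w g -> in_H2 w (fun n => f n - g n)%C.
Proof.
  intros Hf Hg; apply in_H2_add; [exact Hf|].
  apply ex_series_ext with (fun n => Cmod (g n) ^ 2 * w n); [|exact Hg].
  intro n; now rewrite Cmod_opp.
Qed.

Lemma in_H2_sub_scal (c : C) (f g : nat -> C) :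
  in_H2 w f -> in_H2 w g -> in_H2 w (fun n => g n - c * f n)%C.
Proof. intros Hf Hg; apply (in_H2_sub g (fun n => c * f n)%C Hg), in_H2_scal, Hf. Qed.

Definition bshift (g : nat -> C) (n : nat) : C := (g (S n) * RtoC (w (S n) / w n))%C.

Definition Mbz_adj (b : C) (g : nat -> C) (n : nat) : C := (Cconj b * g n - bshift g n)%C.

Section Component.

Variable p : C -> R.
Hypothesis p_sub : forall x y, p (x - y)%C = p x - p y.
Hypothesis p_scal : forall x r, p (x * RtoC r)%C = p x * r.
Hypothesis p_le_Cmod : forall x, Rabs (p x) <= Cmod x.

(* [ip w f g] is the pair [(ipc w Re f g, ipc w Im f g)]; abstracting over the
   real-linear part [p] proves each identity once for both components. *)
Definition ipc (f g : nat -> C) : R := Series (fun n => p (f n * Cconj (g n))%C * w n).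

Lemma ex_series_ipc (f g : nat -> C) :
  in_H2 w f -> in_H2 w g -> ex_series (fun n => p (f n * Cconj (g n))%C * w n).
Proof.
  intros Hf Hg; unfold in_H2 in *.
  apply (ex_series_le (V := R_CompleteNormedModule) _
    (fun n => (Cmod (f n) ^ 2 * w n + Cmod (g n) ^ 2 * w n) * / 2)).
  - intro n; specialize (w_pos n); specialize (p_le_Cmod (f n * Cconj (g n))%C).
    rewrite Cmod_mult, Cmod_conj in p_le_Cmod.
    change norm with Rabs; rewrite Rabs_mult, (Rabs_pos_eq (w n)) by lra.
    pose proof (pow2_ge_0 (Cmod (f n) - Cmod (g n))).
    apply Rle_trans with (Cmod (f n) * Cmod (g n) * w n); [|nra].
    now apply Rmult_le_compat_r; [lra|].
  - apply ex_series_scal_r; now apply (ex_series_plus (V := R_NormedModule)).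
Qed.

Lemma ipc_sub_l (f g h : nat -> C) : in_H2 w f -> in_H2 w g -> in_H2 w h ->
  ipc (fun n => f n - g n)%C h = ipc f h - ipc g h.
Proof.
  intros Hf Hg Hh; unfold ipc.
  rewrite <- Series_minus by now apply ex_series_ipc.
  apply Series_ext; intro n.
  replace ((f n - g n) * Cconj (h n))%C with (f n * Cconj (h n) - g n * Cconj (h n))%C by ring.
  rewrite p_sub; ring.
Qed.

Lemma ipc_sub_r (f g h : nat -> C) : in_H2 w f -> in_H2 w g -> in_H2 w h ->
  ipc f (fun n => g n - h n)%C = ipc f g - ipc f h.
Proof.
  intros Hf Hg Hh; unfold ipc.
  rewrite <- Series_minus by now apply ex_series_ipc.
  apply Series_ext; intro n.
  rewrite Cminus_conj.
  replace (f n * (Cconj (g n) - Cconj (h n)))%C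
    with (f n * Cconj (g n) - f n * Cconj (h n))%C by ring.
  rewrite p_sub; ring.
Qed.

Lemma ipc_scal (c : C) (f g : nat -> C) :
  ipc (fun n => c * f n)%C g = ipc f (fun n => Cconj c * g n)%C.
Proof.
  unfold ipc; apply Series_ext; intro n.
  rewrite Cmult_conj, Cconj_conj; f_equal; f_equal; ring.
Qed.

Lemma ipc_shift (f g : nat -> C) : ipc (shift f) g = ipc f (bshift g).
Proof.
  assert (p0 : p 0%C = 0).
  { replace (p 0%C) with (p (0 * RtoC 0)%C) by (f_equal; ring).
    rewrite p_scal; ring. }
  unfold ipc; rewrite Series_incr_1_aux by (simpl; rewrite Cmult_0_l, p0; ring).
  apply Series_ext; intro n; simpl shift; unfold bshift.
  rewrite Cmult_conj, Cconj_RtoC, Cmult_assoc, p_scal.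
  specialize (w_pos n); field; lra.
Qed.

Lemma ipc_Mbz (b : C) (f g : nat -> C) :
  in_H2 w f -> in_H2 w (shift f) -> in_H2 w g -> in_H2 w (bshift g) ->
  ipc (Mbz b f) g = ipc f (Mbz_adj b g).
Proof.
  intros Hf Hsf Hg Hbg; rewrite Mbz_eq; unfold Mbz_adj.
  rewrite ipc_sub_l, ipc_sub_r, ipc_scal, ipc_shift by now try apply in_H2_scal.
  reflexivity.
Qed.

End Component.

Lemma fst_ip (f g : nat -> C) : fst (ip w f g) = ipc Re f g.
Proof. reflexivity. Qed.

Lemma ipc_Re_self_eq0 (f : nat -> C) : in_H2 w f -> ipc Re f f = 0 -> f = fun _ => 0%C.
Proof.
  intros Hf H0; apply functional_extensionality; intro n.
  unfold ipc in H0; rewrite (Series_ext _ (fun n => Cmod (f n) ^ 2 * w n)) in H0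
    by (intro; now rewrite Re_mul_conj).
  assert (Hn := Series_nonneg_eq0 _
                  (fun n => Rmult_le_pos _ _ (pow2_ge_0 _) (Rlt_le _ _ (w_pos n))) Hf H0 n).
  apply Cmod_eq_0; cbv beta in Hn; specialize (w_pos n).
  apply Rmult_integral in Hn as [Hc | Hw]; [nra | lra].
Qed.

Definition is_adjoint (T : (nat -> C) -> nat -> C) (g h : nat -> C) : Prop :=
  in_H2 w h /\ forall f, in_H2 w f -> ip w (T f) g = ip w f h.

Lemma is_adjoint_unique (T : (nat -> C) -> nat -> C) (g h1 h2 : nat -> C) :
  is_adjoint T g h1 -> is_adjoint T g h2 -> h1 = h2.
Proof.
  intros [H1 E1] [H2 E2].
  assert (Hd : in_H2 w (fun n => h1 n - h2 n)%C) by now apply in_H2_sub.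
  assert (Hip : ip w (fun n => h1 n - h2 n)%C h1 = ip w (fun n => h1 n - h2 n)%C h2)
    by now rewrite <- E1, <- E2.
  assert (Hd0 : ipc Re (fun n => h1 n - h2 n)%C (fun n => h1 n - h2 n)%C = 0).
  { rewrite ipc_sub_r by auto using Re_sub, Re_mul_RtoC, re_le_Cmod.
    apply (f_equal fst) in Hip; rewrite !fst_ip in Hip; lra. }
  apply ipc_Re_self_eq0 in Hd0; [|exact Hd].
  apply functional_extensionality; intro n.
  apply (f_equal (fun d => d n)) in Hd0; simpl in Hd0.
  rewrite <- (Cplus_0_l (h2 n)), <- Hd0; ring.
Qed.

Lemma adjoint_eq (T : (nat -> C) -> nat -> C) (g h : nat -> C) :
  is_adjoint T g h -> adjoint w T g = h.
Proof.
  intro Hh; apply is_adjoint_unique with T g; [|exact Hh].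
  unfold adjoint; apply epsilon_spec; now exists h.
Qed.

Section Bounded_ratio.

Variable K : R.
Hypothesis w_ratio : forall n, w (S n) <= K * w n.

Lemma shift_in_H2 (f : nat -> C) : in_H2 w f -> in_H2 w (shift f).
Proof.
  intro Hf; unfold in_H2 in *; apply ex_series_incr_1; simpl.
  apply (ex_series_le (V := R_CompleteNormedModule) _ (fun n => Cmod (f n) ^ 2 * w n * K)).
  - intro n; change norm with Rabs.
    rewrite Rabs_pos_eq by (apply Rmult_le_pos; [apply pow2_ge_0 | apply Rlt_le, w_pos]).
    pose proof (w_ratio n); pose proof (pow2_ge_0 (Cmod (f n))); nra.
  - now apply ex_series_scal_r.
Qed.

Lemma bshift_in_H2 (g : nat -> C) : in_H2 w g -> in_H2 w (bshift g).
Proof.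
  intro Hg; unfold in_H2 in *.
  apply (ex_series_le (V := R_CompleteNormedModule) _
           (fun n => Cmod (g (S n)) ^ 2 * w (S n) * K)).
  - intro n; change norm with Rabs; unfold bshift.
    pose proof (w_pos n); pose proof (w_pos (S n)); pose proof (w_ratio n).
    rewrite Rabs_pos_eq by (apply Rmult_le_pos; [apply pow2_ge_0 | lra]).
    rewrite Cmod_mult, Cmod_R, Rabs_pos_eq by (apply Rlt_le, Rdiv_lt_0_compat; lra).
    replace ((Cmod (g (S n)) * (w (S n) / w n)) ^ 2 * w n)
      with (Cmod (g (S n)) ^ 2 * w (S n) * (w (S n) / w n)) by (field; lra).
    apply Rmult_le_compat_l; [apply Rmult_le_pos; [apply pow2_ge_0 | lra]|].
    apply Rmult_le_reg_r with (w n); [lra|]. field_simplify; lra.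
  - apply ex_series_scal_r; now apply (ex_series_incr_1 (fun n => Cmod (g n) ^ 2 * w n)).
Qed.

Lemma Mbz_in_H2 (b : C) (f : nat -> C) : in_H2 w f -> in_H2 w (Mbz b f).
Proof.
  intro Hf; rewrite Mbz_eq.
  apply in_H2_sub; [apply in_H2_scal | apply shift_in_H2]; exact Hf.
Qed.

Lemma is_adjoint_Mbz (b : C) (g : nat -> C) : in_H2 w g -> is_adjoint (Mbz b) g (Mbz_adj b g).
Proof.
  intro Hg; split.
  - apply in_H2_sub; [apply in_H2_scal | apply bshift_in_H2]; exact Hg.
  - intros f Hf; assert (Hsf := shift_in_H2 f Hf); assert (Hbg := bshift_in_H2 g Hg).
    apply injective_projections; apply ipc_Mbz; auto using Re_sub, Re_mul_RtoC, re_le_Cmod,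
      Im_sub, Im_mul_RtoC, Im_le_Cmod.
Qed.

Lemma Vop_eq (b : C) (f : nat -> C) : in_H2 w f -> Vop w b f = Mbz_adj b (Mbz b f).
Proof. intro Hf; apply adjoint_eq, is_adjoint_Mbz, Mbz_in_H2, Hf. Qed.

Lemma Vop_in_H2 (b : C) (f : nat -> C) : in_H2 w f -> in_H2 w (Vop w b f).
Proof. intro Hf; rewrite Vop_eq by exact Hf; now apply is_adjoint_Mbz, Mbz_in_H2. Qed.

End Bounded_ratio.
End H2.

(* [spectrum w T l] unfolds to [~ resolvent w T l]. *)
Definition resolvent (w : nat -> R) (T : (nat -> C) -> nat -> C) (l : C) : Prop :=
  forall g, in_H2 w g ->
    exists! f, in_H2 w f /\ (fun n => Cminus (T f n) (Cmult l (f n))) = g.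

Section Unitary.

Variables (w : nat -> R) (U : (nat -> C) -> nat -> C).
Hypothesis w_pos : forall n, 0 < w n.
Hypothesis U_unitary : unitary w U.

Lemma unitary_sub_scal (c : C) (f g : nat -> C) : in_H2 w f -> in_H2 w g ->
  U (fun n => g n - c * f n)%C = fun n => (U g n - c * U f n)%C.
Proof.
  intros Hf Hg; destruct U_unitary as [_ [U_lin _]].
  replace (fun n => g n - c * f n)%C with (fun n => - c * f n + g n)%C
    by (apply functional_extensionality; intro; ring).
  rewrite U_lin by assumption; apply functional_extensionality; intro; ring.
Qed.

Lemma unitary_scal (c : C) (f : nat -> C) : in_H2 w f ->
  U (fun n => c * f n)%C = fun n => (c * U f n)%C.
Proof.
  intro Hf; destruct U_unitary as [_ [U_lin _]].
  replace (fun n => c * f n)%C with (fun n => (c - 1) * f n + f n)%C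
    by (apply functional_extensionality; intro; ring).
  rewrite U_lin by assumption; apply functional_extensionality; intro; ring.
Qed.

Lemma unitary_eq0 (f : nat -> C) : in_H2 w f -> U f = (fun _ => 0%C) -> f = fun _ => 0%C.
Proof.
  intros Hf HUf; apply (ipc_Re_self_eq0 w w_pos f Hf).
  destruct U_unitary as [_ [_ [U_ip _]]].
  specialize (U_ip f f Hf Hf); apply (f_equal fst) in U_ip.
  rewrite <- fst_ip, <- U_ip, HUf; unfold ip; simpl fst.
  rewrite (Series_ext _ (fun n => 0 * w n)) by (intro; simpl; ring).
  rewrite Series_scal_l; ring.
Qed.

Lemma unitary_inj (f g : nat -> C) : in_H2 w f -> in_H2 w g -> U f = U g -> f = g.
Proof.
  intros Hf Hg HUfg.
  assert (Hdiff : (fun n => f n - 1 * g n)%C = fun _ => 0%C).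
  { apply unitary_eq0; [apply in_H2_sub_scal; assumption|].
    rewrite unitary_sub_scal, HUfg by assumption.
    apply functional_extensionality; intro; ring. }
  apply functional_extensionality; intro n.
  apply (f_equal (fun d => d n)) in Hdiff; simpl in Hdiff.
  rewrite <- (Cplus_0_l (g n)), <- Hdiff; ring.
Qed.

Section Transfer.

Variables A B : (nat -> C) -> nat -> C.
Hypothesis A_in_H2 : forall f, in_H2 w f -> in_H2 w (A f).
Hypothesis U_intertwines : forall f, in_H2 w f -> U (A f) = B (U f).

Lemma resolvent_transfer (l : C) : resolvent w A l -> resolvent w B l.
Proof.
  intros HA g Hg; destruct U_unitary as [U_H2 [_ [_ U_onto]]].
  destruct (U_onto g Hg) as [g0 [Hg0 <-]].
  destruct (HA g0 Hg0) as [f0 [[Hf0 E0] Huniq]].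
  exists (U f0); split; [split|].
  - now apply U_H2.
  - now rewrite <- U_intertwines, <- unitary_sub_scal, E0 by auto.
  - intros f' [Hf' E']; destruct (U_onto f' Hf') as [f1 [Hf1 <-]].
    f_equal; apply Huniq; split; [exact Hf1|].
    apply unitary_inj; [apply in_H2_sub_scal; auto | exact Hg0 |].
    now rewrite unitary_sub_scal, U_intertwines by auto.
Qed.

Lemma resolvent_transfer_rev (l : C) : resolvent w B l -> resolvent w A l.
Proof.
  intros HB g Hg; destruct U_unitary as [U_H2 [_ [_ U_onto]]].
  destruct (HB (U g) (U_H2 g Hg)) as [f [[Hf E] Huniq]].
  destruct (U_onto f Hf) as [f0 [Hf0 <-]].
  exists f0; split; [split|].
  - exact Hf0.
  - apply unitary_inj; [apply in_H2_sub_scal; auto | exact Hg |].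
    now rewrite unitary_sub_scal, U_intertwines by auto.
  - intros f1 [Hf1 E1]; apply unitary_inj; [exact Hf0 | exact Hf1 |].
    apply Huniq; split; [now apply U_H2|].
    now rewrite <- U_intertwines, <- unitary_sub_scal, E1 by auto.
Qed.

Lemma point_spectrum_transfer (l : C) : point_spectrum w A l -> point_spectrum w B l.
Proof.
  intros [f [Hf [Hnz E]]]; destruct U_unitary as [U_H2 _].
  exists (U f); split; [now apply U_H2 | split].
  - intro HUf; now apply Hnz, unitary_eq0.
  - now rewrite <- U_intertwines, E, unitary_scal.
Qed.

Lemma point_spectrum_transfer_rev (l : C) : point_spectrum w B l -> point_spectrum w A l.
Proof.
  intros [g [Hg [Hnz E]]]; destruct U_unitary as [_ [_ [_ U_onto]]].
  destruct (U_onto g Hg) as [f [Hf <-]].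
  exists f; split; [exact Hf | split].
  - intro Hf0; apply Hnz.
    assert (Hf0' : (fun n => 0 * f n)%C = f)
      by (rewrite Hf0; apply functional_extensionality; intro; ring).
    rewrite <- Hf0', unitary_scal by exact Hf.
    apply functional_extensionality; intro; ring.
  - apply unitary_inj; [now apply A_in_H2 | now apply in_H2_scal |].
    now rewrite U_intertwines, unitary_scal.
Qed.

End Transfer.
End Unitary.

Lemma unitarily_equivalent_spectrum (w : nat -> R) (A B : (nat -> C) -> nat -> C) (l : C) :
  (forall n, 0 < w n) -> (forall f, in_H2 w f -> in_H2 w (A f)) ->
  unitarily_equivalent w A B -> (spectrum w A l <-> spectrum w B l).
Proof.
  intros w_pos A_in_H2 [U [U_unitary U_intertwines]].
  split; intros Hspec Hres; apply Hspec.
  - exact (resolvent_transfer_rev w U w_pos U_unitary A B A_in_H2 U_intertwines l Hres).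
  - exact (resolvent_transfer w U w_pos U_unitary A B A_in_H2 U_intertwines l Hres).
Qed.

Lemma unitarily_equivalent_point_spectrum
  (w : nat -> R) (A B : (nat -> C) -> nat -> C) (l : C) :
  (forall n, 0 < w n) -> (forall f, in_H2 w f -> in_H2 w (A f)) ->
  unitarily_equivalent w A B -> (point_spectrum w A l <-> point_spectrum w B l).
Proof.
  intros w_pos A_in_H2 [U [U_unitary U_intertwines]]; split.
  - exact (point_spectrum_transfer w U w_pos U_unitary A B U_intertwines l).
  - exact (point_spectrum_transfer_rev w U w_pos U_unitary A B A_in_H2 U_intertwines l).
Qed.

Lemma cexpi_add (s t : R) : (cexpi s * cexpi t)%C = cexpi (s + t).
Proof. unfold cexpi; rewrite cos_plus, sin_plus; apply injective_projections; simpl; ring. Qed.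

Lemma cexpi_opp_r (t : R) : (cexpi t * cexpi (- t))%C = 1%C.
Proof.
  rewrite cexpi_add, Rplus_opp_r; unfold cexpi; rewrite cos_0, sin_0; reflexivity.
Qed.

Lemma Cconj_cexpi (t : R) : Cconj (cexpi t) = cexpi (- t).
Proof. unfold cexpi; rewrite cos_neg, sin_neg; reflexivity. Qed.

Lemma Cmod_cexpi (t : R) : Cmod (cexpi t) = 1.
Proof.
  unfold Cmod, cexpi; cbn [fst snd].
  rewrite <- !Rsqr_pow2, Rplus_comm, sin2_cos2; apply sqrt_1.
Qed.

(* [rot t f] is the coefficient sequence of [z |-> f (e^{it} z)]. *)
Definition rot (t : R) (f : nat -> C) (n : nat) : C := (cexpi (t * INR n) * f n)%C.

Lemma rot_in_H2 (w : nat -> R) (t : R) (f : nat -> C) : in_H2 w f -> in_H2 w (rot t f).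
Proof.
  apply ex_series_ext; intro n; unfold rot.
  rewrite Cmod_mult, Cmod_cexpi; simpl; ring.
Qed.

Lemma rot_ip (w : nat -> R) (t : R) (f g : nat -> C) : ip w (rot t f) (rot t g) = ip w f g.
Proof.
  assert (E : forall n, (rot t f n * Cconj (rot t g n))%C = (f n * Cconj (g n))%C).
  { intro n; unfold rot; rewrite Cmult_conj, Cconj_cexpi.
    transitivity (cexpi (t * INR n) * cexpi (- (t * INR n)) * (f n * Cconj (g n)))%C; [ring|].
    rewrite cexpi_opp_r; ring. }
  unfold ip; f_equal; apply Series_ext; intro n; now rewrite E.
Qed.

Lemma rot_opp_K (t : R) (f : nat -> C) : rot t (rot (- t) f) = f.
Proof.
  apply functional_extensionality; intro n; unfold rot.
  rewrite Cmult_assoc, <- Ropp_mult_distr_l, cexpi_opp_r; ring.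
Qed.

Lemma unitary_rot (w : nat -> R) (t : R) : unitary w (rot t).
Proof.
  split; [|split; [|split]].
  - apply rot_in_H2.
  - intros f g c _ _; apply functional_extensionality; intro; unfold rot; ring.
  - intros f g _ _; apply rot_ip.
  - intros g Hg; exists (rot (- t) g); split; [now apply rot_in_H2 | apply rot_opp_K].
Qed.

Lemma cexpi_shift (t : R) (n : nat) :
  (cexpi t * cexpi (- t * INR (S n)))%C = cexpi (- t * INR n).
Proof. rewrite cexpi_add, S_INR; f_equal; ring. Qed.

Lemma Mbz_rot (a : C) (t : R) (f : nat -> C) :
  Mbz (a * cexpi t) (rot (- t) f) = fun n => (cexpi t * rot (- t) (Mbz a f) n)%C.
Proof.
  rewrite !Mbz_eq; apply functional_extensionality; intros [|n]; unfold rot; simpl shift.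
  - ring.
  - rewrite <- (cexpi_shift t n); ring.
Qed.

Lemma Mbz_adj_rot (w : nat -> R) (a : C) (t : R) (g : nat -> C) :
  Mbz_adj w (a * cexpi t) (fun n => cexpi t * rot (- t) g n)%C = rot (- t) (Mbz_adj w a g).
Proof.
  apply functional_extensionality; intro n; unfold Mbz_adj, bshift, rot.
  rewrite Cmult_conj, Cconj_cexpi.
  transitivity (Cconj a * (cexpi t * cexpi (- t)) * cexpi (- t * INR n) * g n
                - (cexpi t * cexpi (- t * INR (S n))) * g (S n) * RtoC (w (S n) / w n))%C;
    [ring|].
  rewrite cexpi_opp_r, cexpi_shift; ring.
Qed.

Lemma Vop_rot (w : nat -> R) (K : R) (a : C) (t : R) (f : nat -> C) :
  (forall n, 0 < w n) -> (forall n, w (S n) <= K * w n) -> in_H2 w f ->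
  rot (- t) (Vop w a f) = Vop w (a * cexpi t) (rot (- t) f).
Proof.
  intros w_pos w_ratio Hf.
  rewrite !(Vop_eq w w_pos K w_ratio) by (try apply rot_in_H2; exact Hf).
  now rewrite Mbz_rot, Mbz_adj_rot.
Qed.

Theorem lemma4p1 (w : nat -> R) (a : C) :
  valid_weight w -> a <> RtoC 0 ->
  forall theta : R,
    unitarily_equivalent w (Vop w a) (Vop w (Cmult a (cexpi theta))) /\
    (forall l : C, spectrum w (Vop w a) l <-> spectrum w (Vop w (Cmult a (cexpi theta))) l) /\
    (forall l : C, point_spectrum w (Vop w a) l <->
                   point_spectrum w (Vop w (Cmult a (cexpi theta))) l).
Proof.
  intros Hw _ theta.
  assert (w_pos := valid_weight_pos w Hw).
  destruct (valid_weight_ratio_bounded w Hw) as [K w_ratio].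
  assert (Vop_a_in_H2 : forall f, in_H2 w f -> in_H2 w (Vop w a f))
    by exact (Vop_in_H2 w w_pos K w_ratio a).
  assert (Hequiv : unitarily_equivalent w (Vop w a) (Vop w (Cmult a (cexpi theta)))).
  { exists (rot (- theta)); split; [apply unitary_rot|].
    intros f Hf; exact (Vop_rot w K a theta f w_pos w_ratio Hf). }
  split; [exact Hequiv | split; intro l].
  - now apply unitarily_equivalent_spectrum.
  - now apply unitarily_equivalent_point_spectrum.
Qed.
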